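(* (CRB for perfect prior perception estimator.) Let $\theta$ be a scalar parameter, $X$ a source signal, $Y$ a measurement and $\hat{X}=\mathcal{F}(Y)$ an estimate of $X$ computed from $Y$, with $\theta-X-Y-\hat{X}$ a Markov chain. Suppose $Y$ is a sufficient measurement of $X$ and $\hat{X}$ is a perfect (prior) perception estimator of $X$, i.e. $p_{\hat{X}}(x)=p_X(x)$. Then the Cramér–Rao bounds for $\hat{\theta}_{\hat{X}}$ and $\hat{\theta}_Y$ are not necessarily the same; that is, these hypotheses do not guarantee $\Delta_Y=\Delta_{\hat{X}}$.
   Context: Fisher information of a random variable $V$ with density $p_\theta(v)$: $J_V(\theta)=E\big[(\partial_\theta\log p_\theta(V))^2\mid\theta\big]$, and $\Delta_V=J_V(\theta)^{-1}$ is the Cramér–Rao lower bound on the mean squared error of unbiased estimators of $\theta$ from $V$. A statistic $T(V)$ (deterministic function) is sufficient for $\theta$ if $\theta-T(V)-V$ is a Markov chain. $Y$ is called a sufficient measurement of $X$ if both $X$ and $Y$ have a sufficient statistic for $\theta$. *)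

From HB Require Import structures.
From mathcomp Require Import all_boot all_order all_algebra.
From mathcomp Require Import all_classical all_reals all_analysis.
Set Implicit Arguments. Unset Strict Implicit. Unset Printing Implicit Defensive.
Import Order.TTheory GRing.Theory Num.Theory.
Import numFieldNormedType.Exports.
Local Open Scope ring_scope.

Section Defs.
Variable R : realType.

Definition is_pmf_family (T : finType) (p : R -> T -> R) : Prop :=
  forall th, (forall t, 0 <= p th t) /\ \sum_(t : T) p th t = 1.

Definition regular_family (T : finType) (p : R -> T -> R) : Prop :=
  forall th t, derivable (fun s => p s t) th 1.

Definition fisher (T : finType) (p : R -> T -> R) (th : R) : R :=
  \sum_(t : T) p th t * (derive1 (fun s => ln (p s t)) th) ^+ 2.

Definition crb (T : finType) (p : R -> T -> R) (th : R) : R :=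
  (fisher p th)^-1.

Definition stat_law (T S : finType) (p : R -> T -> R) (f : T -> S) : R -> S -> R :=
  fun th s => \sum_(t : T | f t == s) p th t.

(* f(V) is a sufficient statistic for theta: theta - f(V) - V is a Markov
   chain, i.e. p(v | f(V) = f(v), theta) does not depend on theta
   (written without division). *)
Definition sufficient_stat (T S : finType) (p : R -> T -> R) (f : T -> S) : Prop :=
  forall th th' v,
    p th v * stat_law p f th' (f v) = p th' v * stat_law p f th (f v).

Definition has_sufficient_stat (T : finType) (p : R -> T -> R) : Prop :=
  exists (S : finType) (f : T -> S), sufficient_stat p f.

Definition marg1 (TX TY : finType) (pXY : R -> TX -> TY -> R) : R -> TX -> R :=
  fun th x => \sum_(y : TY) pXY th x y.
Definition marg2 (TX TY : finType) (pXY : R -> TX -> TY -> R) : R -> TY -> R :=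
  fun th y => \sum_(x : TX) pXY th x y.

(* theta - X - Y is a Markov chain: p(y | x, theta) does not depend on theta. *)
Definition markov_param (TX TY : finType) (pXY : R -> TX -> TY -> R) : Prop :=
  forall th th' x y,
    pXY th x y * marg1 pXY th' x = pXY th' x y * marg1 pXY th x.

End Defs.

From HB Require Import structures.
From mathcomp Require Import all_boot all_order all_algebra.
From mathcomp Require Import all_classical all_reals all_analysis.
Import Order.TTheory GRing.Theory Num.Theory.
Import numFieldNormedType.Exports.
Local Open Scope ring_scope.

(** Take [X] Bernoulli with [P(X = 1 | theta) = exp(-theta^2)], observe it
    perfectly ([Y = X]) and let the estimate be the constant [Xhat = 1].  Both
    [X] and [Y] are their own sufficient statistics, and under the prior
    concentrated at [theta = 0] we have [X = 1] almost surely, so [Xhat] has the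
    same prior-averaged law as [X]: perfect perception only constrains the
    averaged law, not its dependence on [theta].  Yet [Xhat] carries no
    information about [theta] while [Y] carries positive Fisher information, so
    the two Cramer-Rao bounds differ. *)

Section statistics.
Context {R : realType}.

Lemma sufficient_stat_id (T : finType) (p : R -> T -> R) : sufficient_stat p id.
Proof. by move=> th th' v; rewrite /stat_law /= !big_pred1_eq mulrC. Qed.

Lemma stat_law_cst (T S : finType) (p : R -> T -> R) (s0 : S) :
  is_pmf_family p -> stat_law p (fun=> s0) = fun _ s => (s == s0)%:R.
Proof.
move=> pmf_p; apply/funext => th; apply/funext => s; rewrite /stat_law.
have [_ | _] := eqVneq s0 s; last exact: big_pred0.
by case: (pmf_p th).
Qed.

Lemma fisher_cst (T : finType) (q : T -> R) th : fisher (fun=> q) th = 0.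
Proof.
rewrite /fisher big1 // => t _.
by rewrite (_ : (fun=> ln (q t)) = cst (ln (q t))) // derive1_cst expr0n mulr0.
Qed.

Lemma fisher_gt0 (T : finType) (p : R -> T -> R) th t0 :
  (forall t, 0 <= p th t) -> 0 < p th t0 ->
  derive1 (fun s => ln (p s t0)) th != 0 -> 0 < fisher p th.
Proof.
move=> p_ge0 pt0_gt0 score_neq0; rewrite /fisher (bigD1 t0) //=.
apply: ltr_pwDl; first by rewrite mulr_gt0 // exprn_even_gt0.
by apply: sumr_ge0 => t _; rewrite mulr_ge0 // sqr_ge0.
Qed.

End statistics.

Section diagonal_law.
Context {R : realType} {T : finType} (p : R -> T -> R).

Definition diag_law th (x y : T) : R := (y == x)%:R * p th x.

Lemma marg1_diag_law : marg1 diag_law = p.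
Proof.
apply/funext => th; apply/funext => x; rewrite /marg1 /diag_law.
rewrite (bigD1 x) //= eqxx mul1r big1 ?addr0 // => y /negbTE ->.
by rewrite mul0r.
Qed.

Lemma marg2_diag_law : marg2 diag_law = p.
Proof.
apply/funext => th; apply/funext => y; rewrite /marg2 /diag_law.
rewrite (bigD1 y) //= eqxx mul1r big1 ?addr0 // => x.
by rewrite eq_sym => /negbTE ->; rewrite mul0r.
Qed.

Lemma markov_param_diag_law : markov_param diag_law.
Proof. by move=> th th' x y; rewrite marg1_diag_law /diag_law mulrAC. Qed.

Lemma is_pmf_diag_law :
  is_pmf_family p -> is_pmf_family (fun th (xy : T * T) => diag_law th xy.1 xy.2).
Proof.
move=> pmf_p th; have [p_ge0 p_sum1] := pmf_p th; split.
  by move=> [x y]; rewrite mulr_ge0.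
rewrite -(pair_bigA _ (diag_law th)) /=.
by rewrite -[RHS]p_sum1 -marg1_diag_law.
Qed.

Lemma regular_diag_law :
  regular_family p -> regular_family (fun th (xy : T * T) => diag_law th xy.1 xy.2).
Proof. by move=> reg_p th [x y]; apply: derivableM => //; exact: derivable_cst. Qed.

End diagonal_law.

Section bernoulli_family.
Context {R : realType} (f : R -> R).

Definition bernoulli_family th (b : bool) : R := if b then f th else 1 - f th.

Lemma is_pmf_bernoulli_family :
  (forall th, 0 <= f th <= 1) -> is_pmf_family bernoulli_family.
Proof.
move=> f01 th; have /andP[f_ge0 f_le1] := f01 th; split.
  by case=> /=; rewrite ?subr_ge0.
by rewrite big_bool /= addrC subrK.
Qed.

Lemma regular_bernoulli_family :
  (forall th, derivable f th 1) -> regular_family bernoulli_family.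
Proof.
by move=> df th [] /=; [exact: df | apply: derivableB => //; exact: derivable_cst].
Qed.

Lemma measurable_bernoulli_family b :
  measurable_fun setT f -> measurable_fun setT (bernoulli_family ^~ b).
Proof. by case: b => mf //=; exact: measurable_realfun.measurable_funB. Qed.

End bernoulli_family.

Lemma integral_dirac_EFin (R : realType) (f : R -> R) (a : R) :
  measurable_fun setT f -> (\int[\d_a]_x (f x)%:E = (f a)%:E)%E.
Proof.
move=> mf; rewrite integral_dirac ?diracE ?in_setT ?mul1e //.
exact/measurable_realfun.measurable_EFinP.
Qed.

Section gaussian_bump.
Context {R : realType}.

Definition bump (th : R) : R := expR (- th ^+ 2).

Lemma bump_gt0 th : 0 < bump th.
Proof. exact: expR_gt0. Qed.

Lemma bump_le1 th : bump th <= 1.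
Proof. by rewrite /bump -expR0 ler_expR lerNl oppr0 sqr_ge0. Qed.

Lemma bump0 : bump 0 = 1.
Proof. by rewrite /bump expr0n oppr0 expR0. Qed.

Lemma is_derive_neg_sqr (x : R) : is_derive x 1 (fun s : R => - s ^+ 2) (- (x *+ 2)).
Proof.
apply: is_deriveN; have := is_deriveX 2 (is_derive_id x (1 : R)).
by rewrite expr1 scaler1 mulr_natl.
Qed.

Lemma derivable_bump th : derivable bump th 1.
Proof.
have [+ _] := @is_derive1_comp R expR _ th _ _ _ (is_derive_neg_sqr th).
exact.
Qed.

Lemma measurable_bump : measurable_fun setT bump.
Proof.
apply: measurableT_comp; first exact: measurable_realfun.measurable_expR.
apply: measurable_realfun.measurable_funN; exact: measurable_realfun.measurable_funX.
Qed.

Lemma derive1_ln_bump th : derive1 (fun s => ln (bump s)) th = - (th *+ 2).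
Proof.
rewrite (_ : (fun s => ln (bump s)) = fun s => - s ^+ 2); last first.
  by apply/funext => s; rewrite /bump expRK.
by rewrite derive1E; have [_ ->] := is_derive_neg_sqr th.
Qed.

End gaussian_bump.

Theorem proposition12 (R : realType) :
  exists (TX TY : finType) (pXY : R -> TX -> TY -> R) (F : TY -> TX)
         (prior : probability R R),
    [/\ is_pmf_family (fun th (xy : TX * TY) => pXY th xy.1 xy.2)
         /\ regular_family (fun th (xy : TX * TY) => pXY th xy.1 xy.2),
        markov_param pXY,
        has_sufficient_stat (marg1 pXY) /\ has_sufficient_stat (marg2 pXY),
        (forall x : TX,
           (\int[prior]_th ((marg1 pXY th x)%:E) =
            \int[prior]_th ((stat_law (marg2 pXY) F th x)%:E))%E)
      & exists th : R,
          crb (marg2 pXY) th != crb (stat_law (marg2 pXY) F) th].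
Proof.
pose pX := bernoulli_family (@bump R).
have pmf_pX : is_pmf_family pX.
  by apply: is_pmf_bernoulli_family => th; rewrite ltW ?bump_gt0 ?bump_le1.
exists bool, bool, (diag_law pX), (fun=> true), \d_(0 : R).
rewrite marg1_diag_law marg2_diag_law stat_law_cst //; split.
- split; first exact: is_pmf_diag_law.
  by apply/regular_diag_law/regular_bernoulli_family; exact: derivable_bump.
- exact: markov_param_diag_law.
- by split; exists bool, id; exact: sufficient_stat_id.
- move=> x; rewrite !integral_dirac_EFin //; last first.
    by apply: measurable_bernoulli_family; exact: measurable_bump.
  by rewrite /pX /bernoulli_family bump0; case: x; rewrite ?subrr.
(* The constant estimate has zero Fisher information, i.e. an infinite bound;
   Rocq's [0^-1 = 0] turns it into [0], still distinct from the finite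
   positive bound of [Y]. *)
- exists 1; rewrite /crb fisher_cst invr0 invr_eq0; apply: lt0r_neq0.
  apply: (@fisher_gt0 _ _ _ _ true); first by case: (pmf_pX 1).
    exact: bump_gt0.
  by rewrite /= derive1_ln_bump oppr_eq0 pnatr_eq0.
Qed.
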